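(* Let $R_4=\{a_1,a_2,b_1,b_2\}$ be the topological quandle with operations $a_i\triangleright a_j=a_i$, $b_i\triangleright b_j=b_i$, $a_i\triangleright b_j=a_{i+1}$, $b_i\triangleright a_j=b_{i+1}$, where subscripts are taken mod 2 so that $2+1$ means $1$. (This is the dihedral quandle of four elements.) Give $R_4$ the topology $\{\emptyset,\{a_1,a_2\},\{b_1,b_2\},R_4\}$. Then the first cohomology group $\bar{H}^{1}_{Q}(R_{4})=\mathbb{Z}^{4}$.
   Context: Setting: For a topological quandle $X$, $C_n(X)$ is the free abelian group generated by the singular $n$-simplices $\sigma:\Delta^n\to X$. We write $\sigma_{[x_1,\dots,x_{n+1}]}$ for a simplex whose $i$-th vertex maps to $x_i$. The boundary map is $\partial_n(\sigma_{[x_1,\dots,x_{n+1}]})=\sum_{i=2}^{n+1}(-1)^i(\sigma_{[x_1,\dots,\hat{x_i},\dots,x_{n+1}]}-\sigma_{[x_1\triangleright x_i,\dots,x_{i-1}\triangleright x_i,\hat{x_i},\dots,x_{n+1}]})$. $\bar{C}^R_n(X)$ is the quotient of $C_n(X)$ that identifies two $n$-simplices whenever they have the same vertices. $\bar{C}^D_n(X)$ is the subcomplex generated by the simplices $\sigma_{[x_1,\dots,x_{n+1}]}$ with $x_i=x_{i+1}$ for some $i$, for $n\ge1$; it is $0$ for $n=0$. Then $\bar{C}^Q_n(X)=\bar{C}^R_n(X)/\bar{C}^D_n(X)$. The group $\bar{H}^n_Q(X)$ is the $n$-th cohomology of $\mathrm{Hom}(\bar{C}^Q_*(X),\mathbb{Z})$.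 *)

From HB Require Import structures.
From mathcomp Require Import all_boot all_order all_algebra.
From mathcomp Require Import all_classical all_reals all_analysis.
From mathcomp Require Import Rstruct Rstruct_topology.
From Stdlib Require Import Rdefinitions.

Set Implicit Arguments.
Unset Strict Implicit.
Unset Printing Implicit Defensive.
Import Order.TTheory GRing.Theory Num.Theory.
Local Open Scope classical_set_scope.
Local Open Scope ring_scope.

Definition std_simplex (n : nat) : set 'rV[R]_n.+1 :=
  [set v | (forall i, 0 <= v ord0 i) /\ \sum_(i < n.+1) v ord0 i = 1].

Definition simplex_vertex (n : nat) (i : 'I_n.+1) : 'rV[R]_n.+1 :=
  delta_mx ord0 i.

Section QuandleComplex.
Variables (X : topologicalType) (qop : X -> X -> X).

(* A tuple (x_1,...,x_{n+1}) is the vertex tuple of some singular n-simplex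
   sigma : Delta^n -> X. The generators of \bar C^R_n(X) are exactly these
   tuples. *)
Definition realizable (n : nat) (x : 'I_n.+1 -> X) : Prop :=
  exists sigma : 'rV[R]_n.+1 -> X,
    {within @std_simplex n, continuous sigma} /\
    forall i, sigma (simplex_vertex i) = x i.

(* x_i = x_{i+1} for some i (generators of \bar C^D_n; none for n = 0). *)
Definition degenerate (n : nat) (x : 'I_n.+1 -> X) : Prop :=
  exists i j : 'I_n.+1, val j = (val i).+1 /\ x i = x j.

(* Basis elements of the free abelian group \bar C^Q_n(X). *)
Definition qgen (n : nat) (x : 'I_n.+1 -> X) : Prop :=
  realizable x /\ ~ degenerate x.

(* An n-cochain, i.e. an element of Hom(\bar C^Q_n(X), Z), given by its
   values on all (n+1)-tuples, required to vanish off the basis. *)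
Definition qcochain (n : nat) (f : ('I_n.+1 -> X) -> int) : Prop :=
  forall x, ~ qgen x -> f x = 0.

(* The faces occurring in the boundary formula (0-based index j = i - 1). *)
Definition face (m : nat) (x : 'I_m.+2 -> X) (j : 'I_m.+2) : 'I_m.+1 -> X :=
  fun k => x (lift j k).
Definition qface (m : nat) (x : 'I_m.+2 -> X) (j : 'I_m.+2) : 'I_m.+1 -> X :=
  fun k => if ltn (val (lift j k)) (val j) then qop (x (lift j k)) (x j)
           else x (lift j k).

(* delta^m f = f o partial_{m+1}, evaluated at an (m+2)-tuple x:
   sum_{i=2}^{m+2} (-1)^i (f(d_i x) - f(d'_i x)). *)
Definition qcoboundary (m : nat) (f : ('I_m.+1 -> X) -> int)
    : ('I_m.+2 -> X) -> int :=
  fun x => \sum_(j < m.+2 | ltn 0 (val j))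
             (-1) ^+ (val j).+1 * (f (face x j) - f (qface x j)).

Definition qcocycle (m : nat) (f : ('I_m.+2 -> X) -> int) : Prop :=
  qcochain f /\ forall x : 'I_m.+3 -> X, qgen x -> qcoboundary f x = 0.

Definition qcobound (m : nat) (f : ('I_m.+2 -> X) -> int) : Prop :=
  qcochain f /\
  exists g : ('I_m.+1 -> X) -> int,
    qcochain g /\ forall x : 'I_m.+2 -> X, qgen x -> f x = qcoboundary g x.

(* \bar H^{m+1}_Q(X) = Z^{m+1} / B^{m+1} is isomorphic to Z^k:
   there is an additive surjection Z^{m+1} -> Z^k with kernel B^{m+1}. *)
Definition qcohomology_iso_Zk (m k : nat) : Prop :=
  exists phi : (('I_m.+2 -> X) -> int) -> 'rV[int]_k,
    [/\ (forall f g, qcocycle f -> qcocycle g ->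
           phi (fun x => f x + g x) = phi f + phi g),
        (forall v, exists f, qcocycle f /\ phi f = v) &
        (forall f, qcocycle f -> (phi f = 0 <-> qcobound f))].

End QuandleComplex.

Inductive R4 := a1 | a2 | b1 | b2.

Definition R4_code (x : R4) : 'I_4 :=
  match x with a1 => inord 0 | a2 => inord 1 | b1 => inord 2 | b2 => inord 3 end.
Definition R4_decode (i : 'I_4) : R4 :=
  match val i with 0 => a1 | 1 => a2 | 2 => b1 | _ => b2 end.
Lemma R4_codeK : cancel R4_code R4_decode.
Proof. by case; rewrite /R4_decode /= inordK. Qed.

HB.instance Definition _ := Equality.copy R4 (can_type R4_codeK).
HB.instance Definition _ := Choice.copy R4 (can_type R4_codeK).

(* letter: true for a_i, false for b_i; next: index i |-> i+1 mod 2 *)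
Definition R4_isa (x : R4) : bool :=
  match x with a1 | a2 => true | _ => false end.
Definition R4_next (x : R4) : R4 :=
  match x with a1 => a2 | a2 => a1 | b1 => b2 | b2 => b1 end.

(* a_i |> a_j = a_i, b_i |> b_j = b_i, a_i |> b_j = a_{i+1}, b_i |> a_j = b_{i+1} *)
Definition R4op (x y : R4) : R4 :=
  if R4_isa x == R4_isa y then x else R4_next x.

(* Topology generated by the subbase {{a1,a2},{b1,b2}}, i.e. the topology
   {emptyset, {a1,a2}, {b1,b2}, R4}. *)
Definition R4_subbase (s : bool) : set R4 :=
  if s then [set x | x = a1 \/ x = a2] else [set x | x = b1 \/ x = b2].

HB.instance Definition _ :=
  isSubBaseTopological.Build R4 (@setT bool) R4_subbase.

From mathcomp Require Import all_boot all_order all_algebra.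
From mathcomp Require Import all_classical all_reals all_analysis.
From mathcomp Require Import finmap Rstruct Rstruct_topology lra.
From Stdlib Require Import Rdefinitions.
Import Order.TTheory GRing.Theory Num.Theory.
Local Open Scope classical_set_scope.
Local Open Scope ring_scope.

(* The blocks {a1, a2} and {b1, b2} of R4 are clopen, so the vertices of a
   singular simplex, being joined by edges of the simplex, all lie in one
   block; conversely each block is indiscrete, so any tuple inside one block
   is the vertex tuple of a singular simplex.  Within a
   block the quandle operation is trivial, x |> y = x, so the two faces in
   each term of the boundary formula coincide and every coboundary vanishes
   on generators.  Hence every 1-cochain is a cocycle, the only 1-coboundary
   is 0, and the first cohomology is free on the four generators
   (a1, a2), (a2, a1), (b1, b2), (b2, b1). *)

Definition simplex_edge {n} (i : 'I_n.+1) (t : R) : 'rV[R]_n.+1 :=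
  simplex_vertex ord0 + t *: (simplex_vertex i - simplex_vertex ord0).

Lemma continuous_simplex_edge n (i : 'I_n.+1) : continuous (simplex_edge i).
Proof.
have -> : simplex_edge i = (fun=> simplex_vertex ord0) +
    (fun t => t *: (simplex_vertex i - simplex_vertex ord0)) by [].
move=> t; apply: continuousD; first exact: cst_continuous.
exact: continuousZr_tmp.
Qed.

Lemma simplex_edge_in n (i : 'I_n.+1) t :
  0 <= t <= 1 -> @std_simplex n (simplex_edge i t).
Proof.
have sum_delta m (j : 'I_m) : \sum_(k < m) ((k == j)%:R : R) = 1.
  by rewrite (bigD1 j) //= eqxx big1 ?addr0 // => k /negbTE ->.
move=> /andP[t0 t1]; split.
  move=> k; rewrite /simplex_edge /simplex_vertex !mxE /=.
  by case: (k == ord0); case: (k == i) => /=; lra.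
rewrite /simplex_edge; under eq_bigr => k _ do rewrite !mxE /=.
rewrite big_split /= -mulr_sumr sumrB !sum_delta; lra.
Qed.

Lemma simplex_edge0 n (i : 'I_n.+1) : simplex_edge i 0 = simplex_vertex ord0.
Proof. by rewrite /simplex_edge scale0r addr0. Qed.

Lemma simplex_edge1 n (i : 'I_n.+1) : simplex_edge i 1 = simplex_vertex i.
Proof. by rewrite /simplex_edge scale1r addrC subrK. Qed.

Lemma simplex_vertex_inj {n} : injective (@simplex_vertex n).
Proof.
move=> i j /matrixP/(_ ord0 i); rewrite !mxE !eqxx /=.
by case: eqP => // _ /eqP; rewrite oner_eq0.
Qed.

(* The edge from vertex 0 to vertex i is a connected subset of the simplex, so
   its image under a singular simplex cannot leave a clopen set. *)
Lemma realizable_clopen {X : topologicalType} {n} {x : 'I_n.+1 -> X}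
    {A : set X} :
  open A -> closed A -> realizable x -> A (x ord0) -> forall i, A (x i).
Proof.
move=> oA cA [sigma [csigma sigmaE]] Ax0 i.
set E := simplex_edge i @` `[0, 1].
have E_sub : E `<=` @std_simplex n.
  by move=> _ [t /= /andP[? ?] <-]; apply: simplex_edge_in; apply/andP.
have E_conn : connected E.
  apply: connected_continuous_connected.
    by apply/connected_intervalP; apply: interval_is_interval.
  by apply: continuous_subspaceT => t; apply: continuous_simplex_edge.
have sigmaE_conn : connected (sigma @` E).
  apply: connected_continuous_connected => //.
  exact: continuous_subspaceW E_sub csigma.
have E0 : E (simplex_vertex ord0).
  by exists 0; [rewrite /= in_itv /= lexx ler01 | rewrite simplex_edge0].
have E1 : E (simplex_vertex i).
  by exists 1; [rewrite /= in_itv /= lexx ler01 | rewrite simplex_edge1].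
have sigmaEA : sigma @` E `&` A = sigma @` E.
  apply: sigmaE_conn; [|by exists A|by exists A].
  by exists (x ord0); split => //; exists (simplex_vertex ord0).
have : (sigma @` E) (x i) by exists (simplex_vertex i).
by rewrite -sigmaEA => -[].
Qed.

Lemma R4_subbaseE (b : bool) : R4_subbase b = [set x | R4_isa x = b].
Proof. by case: b; apply/seteqP; split => -[] /=; intuition discriminate. Qed.

Lemma open_R4_block (b : bool) : open [set x : R4 | R4_isa x = b].
Proof.
exists [set [set x : R4 | R4_isa x = b]]; last first.
  apply/seteqP; split => [x [_ -> //] | x bx].
  by exists [set x : R4 | R4_isa x = b].
move=> _ ->; exists [fset b]%fset; first by move=> ? _; exact: in_setT.
apply/seteqP; split => x /=.
  by move=> /(_ b); rewrite /= inE eqxx R4_subbaseE => /(_ isT).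
by move=> bx c; rewrite /= inE => /eqP ->; rewrite R4_subbaseE.
Qed.

Lemma closed_R4_block (b : bool) : closed [set x : R4 | R4_isa x = b].
Proof.
have -> : [set x : R4 | R4_isa x = b] = ~` [set x : R4 | R4_isa x = ~~ b].
  by apply/seteqP; split => x /=; case: b; case: x.
exact/open_closedC/open_R4_block.
Qed.

(* Open sets of R4 are unions of finite intersections of subbase sets, and
   each subbase set is stable under a_i <-> a_{i+1}, b_i <-> b_{i+1}. *)
Lemma open_R4_next (A : set R4) y : open A -> A y -> A (R4_next y).
Proof.
rewrite /open /= => -[D sD <-] [B DB By]; exists B; first exact: DB.
have [F _ FB] := sD _ DB; rewrite -FB in By *.
by move=> c /By /=; rewrite !R4_subbaseE /=; case: (y).
Qed.

Lemma nbhs_R4 (y : R4) (N : set R4) :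
  nbhs y N -> [set z | R4_isa z = R4_isa y] `<=` N.
Proof.
rewrite nbhsE => -[B [oB By] BN] z zy; apply: BN.
by move: zy By (open_R4_next _ _ oB By); case: z; case: y.
Qed.

Lemma continuous_R4_valued (T : topologicalType) (f : T -> R4) :
  (forall s t, R4_isa (f s) = R4_isa (f t)) -> continuous f.
Proof.
move=> f_block t N /nbhs_R4 fN.
have : nbhs t setT by exact: filterT.
by apply: filterS => s _; apply/fN/f_block.
Qed.

Lemma realizable_R4P n (x : 'I_n.+1 -> R4) :
  realizable x <-> forall i, R4_isa (x i) = R4_isa (x ord0).
Proof.
split=> [rx i | x_block].
  exact: (realizable_clopen (open_R4_block _) (closed_R4_block _) rx erefl i).
(* Away from the vertices the value is irrelevant: any map into one block is
   continuous. *)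
exists (fun w =>
  if [pick i | w == simplex_vertex i] is Some i then x i else x ord0); split.
  apply: continuous_subspaceT; apply: continuous_R4_valued => v w.
  by case: pickP => [i _|_]; case: pickP => [j _|_] /=; rewrite ?x_block.
move=> i; case: pickP => [j /eqP/simplex_vertex_inj -> //|/(_ i)].
by rewrite eqxx.
Qed.

Lemma qface_trivial (X : topologicalType) (qop : X -> X -> X) m
    (x : 'I_m.+2 -> X) :
  (forall i j, qop (x i) (x j) = x i) -> qface qop x =1 face x.
Proof.
by move=> x_triv j; apply: funext => k; rewrite /qface /face x_triv if_same.
Qed.

Lemma qcoboundary_trivial (X : topologicalType) (qop : X -> X -> X) m
    (g : ('I_m.+1 -> X) -> int) (x : 'I_m.+2 -> X) :
  (forall i j, qop (x i) (x j) = x i) -> qcoboundary qop g x = 0.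
Proof.
move=> x_triv; rewrite /qcoboundary big1 // => j _.
by rewrite qface_trivial // subrr mulr0.
Qed.

Lemma R4op_block (x y : R4) : R4_isa x = R4_isa y -> R4op x y = x.
Proof. by rewrite /R4op => ->; rewrite eqxx. Qed.

Lemma qcoboundary_R4 m (g : ('I_m.+1 -> R4) -> int) (x : 'I_m.+2 -> R4) :
  realizable x -> qcoboundary R4op g x = 0.
Proof.
move/realizable_R4P => x_block; apply: qcoboundary_trivial => i j.
by apply: R4op_block; rewrite !x_block.
Qed.

Lemma qcocycle_R4 m (f : ('I_m.+2 -> R4) -> int) :
  qcocycle R4op f <-> qcochain f.
Proof.
split=> [[] // | cf]; split=> // x [rx _].
exact: qcoboundary_R4.
Qed.

Lemma qcobound_R4 m (f : ('I_m.+2 -> R4) -> int) :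
  qcobound R4op f <-> qcochain f /\ forall x, qgen x -> f x = 0.
Proof.
split=> [[cf [g [_ fg]]] | [cf f0]]; split=> //.
  by move=> x qx; rewrite fg // qcoboundary_R4 //; case: qx.
exists (fun=> 0); split=> // x qx.
by rewrite f0 // qcoboundary_R4 //; case: qx.
Qed.

Definition tuple2 {X : Type} (u v : X) : 'I_2 -> X :=
  fun i => if val i == 0%N then u else v.

Lemma tuple2_eta {X : Type} (x : 'I_2 -> X) : x = tuple2 (x ord0) (x ord_max).
Proof.
by apply: funext => -[[|[|//]] ?]; rewrite /tuple2 /=; congr x; apply: val_inj.
Qed.

Definition R4_gen (u : R4) : 'I_2 -> R4 := tuple2 u (R4_next u).

Lemma qgen_R4_gen (u : R4) : qgen (R4_gen u).
Proof.
split; first by apply/realizable_R4P => -[[|[|//]] ?]; case: u.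
move=> [[[|[|//]] ?] [[[|[|//]] ?] [//= _]]].
by case: u.
Qed.

Lemma qgen1_R4_gen (x : 'I_2 -> R4) : qgen x -> x = R4_gen (x ord0).
Proof.
move=> [/realizable_R4P/(_ ord_max) x_block nx].
have x01 : x ord0 <> x ord_max by move=> e; apply: nx; exists ord0, ord_max.
rewrite {1}(tuple2_eta x) /R4_gen; congr tuple2.
by move: x_block x01; case: (x ord0); case: (x ord_max).
Qed.

Lemma R4_decodeK : cancel R4_decode R4_code.
Proof.
move=> k; apply/val_inj; rewrite /R4_decode.
by case: k => -[|[|[|[|//]]]] /= ?; rewrite inordK.
Qed.

Theorem mainTheorem17 : @qcohomology_iso_Zk R4 R4op 0 4.
Proof.
exists (fun f => \row_k f (R4_gen (R4_decode k))); split.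
- by move=> f g _ _; apply/rowP => k; rewrite !mxE.
- move=> v.
  exists (fun x => if `[< qgen x >] then v ord0 (R4_code (x ord0)) else 0).
  split; first by apply/qcocycle_R4 => x; case: asboolP.
  by apply/rowP => k; rewrite mxE asboolT ?R4_decodeK //; apply: qgen_R4_gen.
- move=> f /qcocycle_R4 cf; rewrite qcobound_R4.
  split=> [/rowP f0 | [_ f0]]; last first.
    by apply/rowP => k; rewrite !mxE f0 //; apply: qgen_R4_gen.
  split=> // x qx; rewrite (qgen1_R4_gen x qx).
  by move: (f0 (R4_code (x ord0))); rewrite !mxE R4_codeK.
Qed.
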